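(* In the discrete first-price auction (under either tie rule), let $\beta$ be a bidding function used by some player in an equilibrium. Then for any $v,v'\in X$ with $v'>v$, we have $\beta(v')\ge\beta(v)$.
   Context: Model. There are $n\ge 2$ risk-neutral bidders competing for one indivisible object. Normalise the grid so that values and bids lie in $X=\{0,1,2,\dots,x\}$ for some $x\in\mathbb N$. Each bidder $i$ privately learns a value $v_i\in X$; values are drawn independently across bidders and every element of $X$ has strictly positive probability. Each bidder submits a bid $b_i\in X$. A (pure) strategy of bidder $i$ is a bidding function $\beta_i:X\to X$. Tie rules: in the model without ties, bidder $i$ wins iff $b_i>b_j$ for all $j\neq i$ (if the highest bid is tied, nobody wins); in the model with ties, if $m$ bidders submit the highest bid, each of them wins with probability $1/m$. In the first-price auction, a bidder with value $v_i$ bidding $b_i$ gets expected payoff $(v_i-b_i)\Pr(i\text{ wins})$. An equilibrium is a profile of bidding functions such that each bidder's bidding function maximises their expected payoff given the others' bidding functions (a pure-strategy Bayes–Nash equilibrium) and such that no bidder uses a weakly dominated bidding function (a bidding function is weakly dominated if some other bidding function yields at least as high expected payoff against every profile of opponents' bidding functions, and strictly higher against some). *)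

From mathcomp Require Import all_boot all_order all_algebra.
Set Implicit Arguments. Unset Strict Implicit. Unset Printing Implicit Defensive.
Import Order.TTheory GRing.Theory Num.Theory.
Local Open Scope ring_scope.

(* Grid X = {0,...,x} is 'I_x.+1; bidders are 'I_n. *)
Inductive tie_rule := NoTies | WithTies.

Definition profile (n x : nat) := 'I_n -> ('I_x.+1 -> 'I_x.+1).

Definition win_share (R : realFieldType) (tr : tie_rule) (n x : nat)
  (i : 'I_n) (b : 'I_n -> 'I_x.+1) : R :=
  match tr with
  | NoTies =>
      if [forall j : 'I_n, (j != i) ==> (nat_of_ord (b j) < nat_of_ord (b i))%N]
      then 1 else 0
  | WithTies =>
      if [forall j : 'I_n, (nat_of_ord (b j) <= nat_of_ord (b i))%N]
      then (#|[set j : 'I_n | b j == b i]|%:R)^-1 else 0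
  end.

Definition prob_vals (R : realFieldType) (n x : nat) (p : 'I_n -> 'I_x.+1 -> R)
  (w : {ffun 'I_n -> 'I_x.+1}) : R := \prod_(j : 'I_n) p j (w j).

Definition full_support_dists (R : realFieldType) (n x : nat)
  (p : 'I_n -> 'I_x.+1 -> R) : Prop :=
  (forall i v, 0 < p i v) /\ (forall i, \sum_(v : 'I_x.+1) p i v = 1).

Definition payoff (R : realFieldType) (tr : tie_rule) (n x : nat)
  (p : 'I_n -> 'I_x.+1 -> R) (s : profile n x) (i : 'I_n) : R :=
  \sum_(w : {ffun 'I_n -> 'I_x.+1})
     prob_vals p w *
     (((nat_of_ord (w i))%:R - (nat_of_ord (s i (w i)))%:R) *
      win_share R tr i (fun j => s j (w j))).

Definition upd (n x : nat) (s : profile n x) (i : 'I_n)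
  (beta : 'I_x.+1 -> 'I_x.+1) : profile n x :=
  fun j => if j == i then beta else s j.

Definition best_response (R : realFieldType) (tr : tie_rule) (n x : nat)
  (p : 'I_n -> 'I_x.+1 -> R) (s : profile n x) (i : 'I_n) : Prop :=
  forall beta' : 'I_x.+1 -> 'I_x.+1,
    payoff tr p (upd s i beta') i <= payoff tr p s i.

(* beta is weakly dominated for bidder i (opponent profiles t; t i is irrelevant). *)
Definition weakly_dominated (R : realFieldType) (tr : tie_rule) (n x : nat)
  (p : 'I_n -> 'I_x.+1 -> R) (i : 'I_n) (beta : 'I_x.+1 -> 'I_x.+1) : Prop :=
  exists beta' : 'I_x.+1 -> 'I_x.+1,
    (forall t : profile n x, payoff tr p (upd t i beta) i <= payoff tr p (upd t i beta') i)
    /\ (exists t : profile n x, payoff tr p (upd t i beta) i < payoff tr p (upd t i beta') i).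

Definition equilibrium (R : realFieldType) (tr : tie_rule) (n x : nat)
  (p : 'I_n -> 'I_x.+1 -> R) (s : profile n x) : Prop :=
  forall i : 'I_n, best_response tr p s i /\ ~ weakly_dominated tr p i (s i).

From mathcomp Require Import all_boot all_order all_algebra.
Import Order.TTheory GRing.Theory Num.Theory.
From mathcomp Require Import ring lra.
From Stdlib Require Import FunctionalExtensionality.

(* Fix a bidder j and the bidding functions t of the others.  For a value v
   and a bid c, let Q(v, c) ("winning mass") be the ex-ante weight of the
   events where j has value v, bids c and wins.  The payoff of j splits as a
   part not depending on what j bids at value v, plus the local term
   (v - c) Q(v, c).  Independence of values gives Q(u, c) p(v) = Q(v, c) p(u),
   so at a fixed reference value v the function G(c) = Q(v, c) captures the
   winning chances of every bid; G is nondecreasing in c, and positive for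
   c > 0 once every opponent bids 0 at value 0.  The latter holds in every
   equilibrium, since a positive bid at value 0 is weakly dominated.
   A best response therefore maximises (u - c) G(c) in c for every value u,
   and the usual single-crossing argument (a purely real-arithmetic lemma
   proved first) shows that such maximisers are nondecreasing in u. *)

Set Implicit Arguments. Unset Strict Implicit.
Local Open Scope ring_scope.

Lemma single_crossing (R : realFieldType) (V V' B B' G G' : R) :
  V < V' -> B' < B -> G' <= G -> 0 < G ->
  (V - B') * G' <= (V - B) * G -> (V' - B) * G <= (V' - B') * G' -> False.
Proof.
move=> ltVV' ltB'B leG'G G_gt0 opt_V opt_V'.
have eqG : G' = G.
  apply/eqP; rewrite eq_le leG'G /=.
  have : (V' - V) * G <= (V' - V) * G' by lra.
  by rewrite ler_pM2l // subr_gt0.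
rewrite eqG in opt_V; nra.
Qed.

Section WinShare.
Variables (R : realFieldType) (tr : tie_rule) (n x : nat).

Lemma win_share_ge0 (i : 'I_n) (b : 'I_n -> 'I_x.+1) : 0 <= win_share R tr i b.
Proof. by case: tr => /=; case: ifP; rewrite ?invr_ge0 ?ler0n ?ler01. Qed.

Lemma win_share_mono (i : 'I_n) (b b' : 'I_n -> 'I_x.+1) :
  (b i < b' i)%N -> (forall j, j != i -> b j = b' j) ->
  win_share R tr i b <= win_share R tr i b'.
Proof.
move=> lt_bi eq_others; case: tr => /=.
  case: ifP => [/forallP wins|_]; last by case: ifP.
  rewrite ifT //; apply/forallP => j; apply/implyP => ji.
  rewrite -(eq_others j ji); exact: ltn_trans (implyP (wins j) ji) lt_bi.
case: ifP => [/forallP top|_]; last by case: ifP; rewrite ?invr_ge0 ?ler0n.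
have top' : [forall j, (b' j <= b' i)%N].
  apply/forallP => j; case: (eqVneq j i) => [->//|ji].
  rewrite -(eq_others j ji); exact: leq_trans (top j) (ltnW lt_bi).
have alone : [set j | b' j == b' i] = [set i].
  apply/setP => j; rewrite !inE; case: (eqVneq j i) => [->|ji]; first by rewrite eqxx.
  apply/negbTE; rewrite -(eq_others j ji); apply/negP => /eqP bj.
  by move: (top j); rewrite bj leqNgt lt_bi.
have ties_gt0 : (0 < #|[set j | b j == b i]|)%N by apply/card_gt0P; exists i; rewrite inE.
by rewrite top' alone cards1 invr1 invf_le1 ?ler1n // ltr0n.
Qed.

Lemma win_share_gt0 (i : 'I_n) (b : 'I_n -> 'I_x.+1) :
  (0 < b i)%N -> (forall j, j != i -> b j = ord0) -> 0 < win_share R tr i b.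
Proof.
move=> bi_gt0 others0; case: tr => /=.
  rewrite ifT ?ltr01 //; apply/forallP => j; apply/implyP => ji.
  by rewrite others0.
rewrite ifT; last first.
  by apply/forallP => j; case: (eqVneq j i) => [->//|ji]; rewrite others0.
by rewrite invr_gt0 ltr0n; apply/card_gt0P; exists i; rewrite inE.
Qed.

End WinShare.

Section WinningMass.
Variables (R : realFieldType) (tr : tie_rule) (n x : nat).
Variable p : 'I_n -> 'I_x.+1 -> R.
Local Notation vals := {ffun 'I_n -> 'I_x.+1}.

Lemma prob_vals_gt0 (w : vals) : full_support_dists p -> 0 < prob_vals p w.
Proof. by case=> p_gt0 _; apply: prodr_gt0 => k _; apply: p_gt0. Qed.

Lemma prob_vals_split (w : vals) j :
  prob_vals p w = p j (w j) * \prod_(k | k != j) p k (w k).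
Proof. by rewrite /prob_vals (bigD1 j). Qed.

Definition win_mass (t : profile n x) (j : 'I_n) (v c : 'I_x.+1) : R :=
  \sum_(w : vals | w j == v)
     prob_vals p w * win_share R tr j (fun k => if k == j then c else t k (w k)).

Definition local_payoff (t : profile n x) (j : 'I_n) (v c : 'I_x.+1) : R :=
  ((v : nat)%:R - (c : nat)%:R) * win_mass t j v c.

Definition payoff_off (t : profile n x) (j : 'I_n) (beta : 'I_x.+1 -> 'I_x.+1)
    (v : 'I_x.+1) : R :=
  \sum_(w : vals | w j != v)
     prob_vals p w * (((w j : nat)%:R - (beta (w j) : nat)%:R) *
        win_share R tr j (fun k => upd t j beta k (w k))).

Lemma payoff_split (t : profile n x) j beta v :
  payoff tr p (upd t j beta) j = payoff_off t j beta v + local_payoff t j v (beta v).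
Proof.
rewrite /payoff (bigID (fun w : vals => w j != v)) /=; congr (_ + _).
  by apply: eq_bigr => w _; rewrite {1}/upd eqxx.
rewrite /local_payoff /win_mass mulr_sumr.
rewrite (eq_bigl (fun w : vals => w j == v)) => [|w]; last by rewrite negbK.
apply: eq_bigr => w /eqP wj; rewrite {1 2}/upd eqxx wj mulrCA.
congr (_ * (_ * _)); congr (win_share _ _ _); apply: functional_extensionality => k.
by rewrite /upd; case: (eqVneq k j) => [->|//]; rewrite wj.
Qed.

Lemma payoff_off_ext (t : profile n x) j beta beta' v :
  (forall z, z != v -> beta z = beta' z) -> payoff_off t j beta v = payoff_off t j beta' v.
Proof.
move=> agree; apply: eq_bigr => w wj; rewrite (agree _ wj).
congr (_ * (_ * _)); congr (win_share _ _ _); apply: functional_extensionality => k.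
by rewrite /upd; case: (eqVneq k j) => [->|//]; rewrite agree.
Qed.

Lemma payoff_change_at (t : profile n x) j beta beta' v :
  (forall z, z != v -> beta z = beta' z) ->
  payoff tr p (upd t j beta') j - payoff tr p (upd t j beta) j =
  local_payoff t j v (beta' v) - local_payoff t j v (beta v).
Proof.
move=> agree; rewrite !(payoff_split _ _ _ v) (payoff_off_ext _ _ agree).
by rewrite opprD addrACA subrr add0r.
Qed.

Hypothesis full_p : full_support_dists p.

Lemma win_mass_ge0 t j v c : 0 <= win_mass t j v c.
Proof.
apply: sumr_ge0 => w _; apply: mulr_ge0; last exact: win_share_ge0.
exact: ltW (prob_vals_gt0 w full_p).
Qed.

Lemma win_mass_mono t j v (c c' : 'I_x.+1) :
  (c < c')%N -> win_mass t j v c <= win_mass t j v c'.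
Proof.
move=> lt_cc'; apply: ler_sum => w _.
apply: ler_wpM2l; first exact: ltW (prob_vals_gt0 w full_p).
by apply: win_share_mono => [|k /negbTE ->]; rewrite ?eqxx.
Qed.

(* If all opponents bid 0 at value 0, a positive bid has positive winning
   mass: it wins when every opponent has value 0. *)
Lemma win_mass_gt0 t j v (c : 'I_x.+1) :
  (forall k, t k ord0 = ord0) -> (0 < c)%N -> 0 < win_mass t j v c.
Proof.
move=> t0 c_gt0.
pose w0 : vals := [ffun k => if k == j then v else ord0].
have w0j : w0 j == v by rewrite ffunE eqxx.
rewrite /win_mass (bigD1 w0) //=; apply: ltr_wpDr.
  apply: sumr_ge0 => w _; apply: mulr_ge0; last exact: win_share_ge0.
  exact: ltW (prob_vals_gt0 w full_p).
apply: mulr_gt0; first exact: prob_vals_gt0.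
by apply: win_share_gt0 => [|k /negbTE kj]; rewrite ?eqxx // kj ffunE kj t0.
Qed.

(* Independence: the winning mass at value u is that at value v rescaled by
   p j u / p j v. *)
Lemma win_mass_scale t j v u c :
  win_mass t j u c * p j v = win_mass t j v c * p j u.
Proof.
rewrite /win_mass !mulr_suml.
pose set_j a (w : vals) : vals := [ffun k => if k == j then a else w k].
have set_jK a b (w : vals) : w j == b -> set_j b (set_j a w) = w.
  move=> /eqP wj; apply/ffunP => k; rewrite !ffunE.
  by case: (eqVneq k j) => [->|//]; rewrite wj.
rewrite (reindex_onto (set_j u) (set_j v)) => [|w]; last exact: set_jK.
rewrite (eq_bigl (fun w : vals => w j == v)) => [|w]; last first.
  rewrite ffunE !eqxx /=; apply/eqP/idP => [<-|]; first by rewrite ffunE eqxx.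
  exact: set_jK.
apply: eq_bigr => w /eqP wj.
rewrite !(prob_vals_split _ j) ffunE eqxx wj.
have -> : \prod_(k | k != j) p k (set_j u w k) = \prod_(k | k != j) p k (w k).
  by apply: eq_bigr => k kj; rewrite ffunE (negbTE kj).
have -> : win_share R tr j (fun k => if k == j then c else t k (set_j u w k)) =
          win_share R tr j (fun k => if k == j then c else t k (w k)).
  by congr (win_share _ _ _); apply: functional_extensionality => k; rewrite ffunE; case: (k == j).
ring.
Qed.

End WinningMass.

Section Equilibrium.
Variables (R : realFieldType) (tr : tie_rule) (n x : nat).
Variables (p : 'I_n -> 'I_x.+1 -> R) (s : profile n x).
Hypotheses (full_p : full_support_dists p) (eq_s : equilibrium tr p s).

Lemma upd_self i : upd s i (s i) = s.
Proof.
by apply: functional_extensionality => k; rewrite /upd; case: (eqVneq k i) => [->|].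
Qed.

(* In equilibrium every bidder bids 0 at value 0: otherwise lowering that
   bid to 0 weakly dominates, strictly so against opponents bidding 0. *)
Lemma equilibrium_zero_bid k : s k ord0 = ord0.
Proof.
apply/eqP/negPn/negP => bid_pos; apply: (eq_s k).2.
pose beta' z := if z == ord0 then ord0 else s k z.
have agree z : z != ord0 -> s k z = beta' z by rewrite /beta' => /negbTE ->.
have bid_gt0 : (0 < s k ord0)%N.
  by rewrite lt0n; apply: contra bid_pos => /eqP bid0; apply/eqP/val_inj.
have gain t : payoff tr p (upd t k beta') k - payoff tr p (upd t k (s k)) k =
    (s k ord0 : nat)%:R * win_mass tr p t k ord0 (s k ord0).
  rewrite (payoff_change_at tr p _ _ agree) /local_payoff /beta' eqxx /=.
  by rewrite subrr mul0r sub0r sub0r mulNr opprK.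
exists beta'; split.
  by move=> t; rewrite -subr_ge0 gain mulr_ge0 ?ler0n ?win_mass_ge0.
exists (fun _ _ => ord0); rewrite -subr_gt0 gain mulr_gt0 ?ltr0n //.
exact: win_mass_gt0.
Qed.

Lemma equilibrium_best_local i u c :
  local_payoff tr p s i u c <= local_payoff tr p s i u (s i u).
Proof.
pose beta' z := if z == u then c else s i z.
have agree z : z != u -> s i z = beta' z by rewrite /beta' => /negbTE ->.
have := (eq_s i).1 beta'; rewrite -[in X in _ <= X](upd_self i) -subr_le0.
by rewrite (payoff_change_at tr p _ _ agree) subr_le0 /beta' eqxx.
Qed.

Lemma equilibrium_best_at_reference i (v u c : 'I_x.+1) :
  ((u : nat)%:R - (c : nat)%:R) * win_mass tr p s i v c <=
  ((u : nat)%:R - (s i u : nat)%:R) * win_mass tr p s i v (s i u).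
Proof.
have p_gt0 z : 0 < p i z by case: full_p.
have := equilibrium_best_local i u c; rewrite -(ler_pM2r (p_gt0 v)) /local_payoff.
by rewrite -!mulrA !(win_mass_scale tr p s i v u) !mulrA ler_pM2r.
Qed.

End Equilibrium.

Theorem lemma3 (R : realFieldType) (n x : nat) (tr : tie_rule)
  (p : 'I_n -> 'I_x.+1 -> R) (s : profile n x) :
  (2 <= n)%N -> full_support_dists p -> equilibrium tr p s ->
  forall (i : 'I_n) (v v' : 'I_x.+1),
    (nat_of_ord v < nat_of_ord v')%N -> (nat_of_ord (s i v) <= nat_of_ord (s i v'))%N.
Proof.
(* The argument works for any number of bidders. *)
move=> _ full_p eq_s i v v' lt_vv'; rewrite leqNgt; apply/negP => lt_bids.
have opt := equilibrium_best_at_reference full_p eq_s i v.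
apply: (single_crossing _ _ (win_mass_mono tr full_p s i v lt_bids) _
          (opt v (s i v')) (opt v' (s i v))); rewrite ?ltr_nat //.
apply: win_mass_gt0 => //; first exact: (equilibrium_zero_bid full_p eq_s).
exact: leq_ltn_trans lt_bids.
Qed.
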